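(* Let $t>0$ and let $u_1,\dots,u_n,v_1,\dots,v_n$ be unit vectors in $\mathbb R^d$. For $m\in[n]$ define the InfoNCE loss $$\mathcal L_{\mathrm{InfoNCE}}(U_{[m]},V_{[m]})=\frac1{2m}\sum_{i\in[m]}\log\Big(1+\sum_{j\in[m]\setminus\{i\}}\exp\big((v_j-v_i)^\top u_i/t\big)\Big)+\frac1{2m}\sum_{i\in[m]}\log\Big(1+\sum_{j\in[m]\setminus\{i\}}\exp\big((u_j-u_i)^\top v_i/t\big)\Big),$$ regarded as a function of the similarities $u_k^\top v_l$ ($k,l\in[m]$) as independent variables. Then for any integers $m_1\le m_2$ in $[n]$ and any distinct indices $i\ne j\in[m_1]$, $$0\le\frac{\partial}{\partial(u_i^\top v_j)}\mathcal L_{\mathrm{InfoNCE}}(U_{[m_2]},V_{[m_2]})\le\frac{\partial}{\partial(u_i^\top v_j)}\mathcal L_{\mathrm{InfoNCE}}(U_{[m_1]},V_{[m_1]}),$$ and the second inequality is an equality if and only if $m_1=m_2$.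
   Context: $[m]=\{1,\dots,m\}$ and $(U_{[m]},V_{[m]})=\{(u_i,v_i):i\in[m]\}$. This loss is the symmetric InfoNCE-based loss $\frac12\mathcal L_{\mathrm{info}}(U,V)+\frac12\mathcal L_{\mathrm{info}}(V,U)$ with $\mathcal L_{\mathrm{info}}(U,V)=\frac1m\sum_i\psi\big(\sum_{j\ne i}\phi((v_j-v_i)^\top u_i)\big)$, $\phi(x)=\exp(x/t)$, $\psi(x)=\log(1+x)$. *)

From mathcomp Require Import all_boot all_order all_algebra.
From mathcomp Require Import all_classical all_reals all_analysis.
Set Implicit Arguments. Unset Strict Implicit. Unset Printing Implicit Defensive.
Import Order.TTheory GRing.Theory Num.Theory.
Local Open Scope ring_scope.

(* R : realType.
   Indices are 0-based naturals: the paper's [m] = {1..m} becomes {0..m-1}. *)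

Definition dotp (R : realType) (d : nat) (x y : 'rV[R]_d) : R :=
  \sum_(k < d) x ord0 k * y ord0 k.

(* Symmetric InfoNCE loss on the first m pairs, written as a function of the
   similarity array S k l = u_k^T v_l (treated as independent variables). *)
Definition infonce (R : realType) (t : R) (m : nat) (S : nat -> nat -> R) : R :=
  (2 * m%:R)^-1 * \sum_(i < m)
      ln (1 + \sum_(j < m | j != i) expR ((S i j - S i i) / t))
  + (2 * m%:R)^-1 * \sum_(i < m)
      ln (1 + \sum_(j < m | j != i) expR ((S j i - S i i) / t)).

Definition upd (R : realType) (S : nat -> nat -> R) (i j : nat) (x : R) :
  nat -> nat -> R :=
  fun k l => if (k == i) && (l == j) then x else S k l.

Definition dinfonce (R : realType) (t : R) (m : nat) (S : nat -> nat -> R)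
  (i j : nat) : R :=
  derive1 (fun x : R => infonce t m (upd S i j x)) (S i j).

Definition simil (R : realType) (d : nat) (u v : nat -> 'rV[R]_d) :
  nat -> nat -> R := fun k l => dotp (u k) (v l).

From mathcomp Require Import all_boot all_order all_algebra.
From mathcomp Require Import all_classical all_reals all_analysis.
From mathcomp Require Import ring.
Set Implicit Arguments. Unset Strict Implicit. Unset Printing Implicit Defensive.
Import Order.TTheory GRing.Theory Num.Theory.
Local Open Scope ring_scope.

(* For i <> j the variable S i j enters the loss through exactly two terms:
   the logit of v_j in the softmax of row i and the logit of u_i in the
   softmax of column j.  Hence the partial derivative is 1/(2 m t) times the
   sum of the two corresponding softmax probabilities.  Enlarging m adds
   nonnegative competitors to both softmax denominators, so both
   probabilities shrink, while the prefactor 1/(2 m) shrinks strictly. *)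

Lemma ler_sum_ord_widen (R : numDomainType) (m1 m2 : nat) (P : pred nat)
    (F : nat -> R) :
  (m1 <= m2)%N -> (forall k, 0 <= F k) ->
  \sum_(k < m1 | P k) F k <= \sum_(k < m2 | P k) F k.
Proof.
move=> le_m12 F_ge0; rewrite -!(big_mkord P F) (big_cat_nat (leq0n m1) le_m12).
by rewrite lerDl sumr_ge0.
Qed.

Section SoftmaxWeight.
Variable R : realType.

Definition softmax_weight (K z : R) : R := expR z / (K + expR z).

Lemma softmax_weight_gt0 (K z : R) : 0 <= K -> 0 < softmax_weight K z.
Proof.
by move=> K_ge0; rewrite divr_gt0 ?expR_gt0 ?ltr_wpDl ?expR_gt0.
Qed.

Lemma ler_softmax_weight (K1 K2 z : R) :
  0 <= K1 -> K1 <= K2 -> softmax_weight K2 z <= softmax_weight K1 z.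
Proof.
move=> K1_ge0 le_K12; rewrite ler_pM2l ?expR_gt0 // lef_pV2 ?lerD2r //.
  by rewrite posrE ltr_wpDl ?expR_gt0 // (le_trans K1_ge0).
by rewrite posrE ltr_wpDl ?expR_gt0.
Qed.

Lemma is_derive_ln_add_expR (t K p x : R) : 0 < K ->
  is_derive x 1 (fun y => ln (K + expR ((y - p) / t)))
    (t^-1 * softmax_weight K ((x - p) / t)).
Proof.
move=> K_gt0.
have d_affine : is_derive x 1 (fun y : R => (y - p) / t) t^-1.
  have -> : (fun y : R => (y - p) / t) = t^-1 *: (id \- cst p).
    by apply/funext => y /=; rewrite mulrC.
  by apply: is_derive_eq; rewrite subr0 scaler1.
have d_arg : is_derive x 1 (fun y => K + expR ((y - p) / t))
    (expR ((x - p) / t) * t^-1).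
  have -> : (fun y => K + expR ((y - p) / t))
      = cst K \+ expR \o (fun y : R => (y - p) / t) by [].
  have := is_derive1_comp (g := fun y : R => (y - p) / t) (is_derive_expR _) d_affine.
  by move=> d; apply: is_derive_eq; rewrite add0r.
have arg_gt0 : 0 < K + expR ((x - p) / t) by rewrite ltr_wpDr ?expR_gt0 // ltW.
have := is_derive1_comp (g := fun y => K + expR ((y - p) / t)) (is_derive1_ln arg_gt0) d_arg.
by move=> d; apply: is_derive_eq; rewrite /softmax_weight; ring.
Qed.

End SoftmaxWeight.

Section InfonceGradient.
Variables (R : realType) (t : R).

Definition row_loss (m : nat) (S : nat -> nat -> R) : R :=
  \sum_(k < m) ln (1 + \sum_(l < m | l != k) expR ((S k l - S k k) / t)).

Definition tr_sim (S : nat -> nat -> R) : nat -> nat -> R := fun k l => S l k.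

Lemma infonceE m S : infonce t m S =
  (2 * m%:R)^-1 * row_loss m S + (2 * m%:R)^-1 * row_loss m (tr_sim S).
Proof. by []. Qed.

Lemma tr_sim_upd S i j x : tr_sim (upd S i j x) = upd (tr_sim S) j i x.
Proof. by apply/funext => k; apply/funext => l; rewrite /tr_sim /upd andbC. Qed.

Definition row_rest m (S : nat -> nat -> R) (i j : nat) : R :=
  \sum_(l < m | (l != i :> nat) && (l != j :> nat)) expR ((S i l - S i i) / t).

Lemma row_rest_ge0 m S i j : 0 <= row_rest m S i j.
Proof. by rewrite sumr_ge0 // => l _; rewrite expR_ge0. Qed.

Lemma ler_row_rest m1 m2 S i j :
  (m1 <= m2)%N -> row_rest m1 S i j <= row_rest m2 S i j.
Proof.
move=> le_m12.
exact: (ler_sum_ord_widen (fun l => (l != i) && (l != j))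
          (F := fun l => expR ((S i l - S i i) / t)) le_m12 (fun l => expR_ge0 _)).
Qed.

Lemma row_loss_upd m S i j x : (i < m)%N -> (j < m)%N -> i != j ->
  row_loss m (upd S i j x) =
    \sum_(k < m | k != i :> nat)
       ln (1 + \sum_(l < m | l != k) expR ((S k l - S k k) / t))
    + ln (1 + row_rest m S i j + expR ((x - S i i) / t)).
Proof.
move=> lt_im lt_jm neq_ij.
rewrite /row_loss (bigD1 (Ordinal lt_im)) //= addrC; congr (_ + _).
  apply: eq_bigr => k neq_ki; congr (ln (1 + _)); apply: eq_bigr => l _.
  by rewrite /upd (negbTE (neq_ki : k != i :> nat)).
have neq_ji : Ordinal lt_jm != Ordinal lt_im by rewrite -val_eqE /= eq_sym.
rewrite (bigD1 (Ordinal lt_jm)) //= /upd !eqxx (negbTE neq_ij) addrCA addrC.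
congr (ln (1 + _ + _)); apply: eq_big => // l /andP [_ neq_lj].
by rewrite (negbTE (neq_lj : l != j :> nat)) andbF.
Qed.

Definition pair_weight m S (i j : nat) : R :=
  softmax_weight (1 + row_rest m S i j) ((S i j - S i i) / t)
  + softmax_weight (1 + row_rest m (tr_sim S) j i) ((S i j - S j j) / t).

Lemma dinfonceE m S i j : (i < m)%N -> (j < m)%N -> i != j ->
  dinfonce t m S i j = (2 * m%:R)^-1 * t^-1 * pair_weight m S i j.
Proof.
move=> lt_im lt_jm neq_ij; rewrite /dinfonce.
set c := (2 * m%:R)^-1.
set Ki := 1 + row_rest m S i j; set Kj := 1 + row_rest m (tr_sim S) j i.
have [Ki_gt0 Kj_gt0] : 0 < Ki /\ 0 < Kj by rewrite !ltr_pwDl ?row_rest_ge0.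
set C := c * \sum_(k < m | k != i :> nat)
           ln (1 + \sum_(l < m | l != k) expR ((S k l - S k k) / t))
       + c * \sum_(k < m | k != j :> nat)
           ln (1 + \sum_(l < m | l != k) expR ((S l k - S k k) / t)).
have loss : (fun x => infonce t m (upd S i j x)) =
    cst C \+ c *: (fun x => ln (Ki + expR ((x - S i i) / t)))
          \+ c *: (fun x => ln (Kj + expR ((x - S j j) / t))).
  apply/funext => x; rewrite infonceE tr_sim_upd row_loss_upd //.
  rewrite (row_loss_upd _ _ lt_jm lt_im); last by rewrite eq_sym.
  by rewrite /C /c /Ki /Kj /tr_sim !fctE /GRing.scale /=; ring.
have di := is_derive_ln_add_expR t (S i i) (S i j) Ki_gt0.
have dj := is_derive_ln_add_expR t (S j j) (S i j) Kj_gt0.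
by rewrite loss derive1E derive_val /pair_weight /GRing.scale /=; ring.
Qed.

Lemma pair_weight_gt0 m S i j : 0 < pair_weight m S i j.
Proof. by rewrite addr_gt0 // softmax_weight_gt0 // addr_ge0 ?row_rest_ge0. Qed.

Lemma ler_pair_weight m1 m2 S i j :
  (m1 <= m2)%N -> pair_weight m2 S i j <= pair_weight m1 S i j.
Proof.
move=> le_m12.
by rewrite lerD // ler_softmax_weight ?addr_ge0 ?row_rest_ge0 ?lerD2l ?ler_row_rest.
Qed.

Hypothesis t_gt0 : 0 < t.

Lemma dinfonce_gt0 m S i j : (i < m)%N -> (j < m)%N -> i != j ->
  0 < dinfonce t m S i j.
Proof.
move=> lt_im lt_jm neq_ij; have m_gt0 : (0 < m)%N := leq_ltn_trans (leq0n i) lt_im.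
by rewrite dinfonceE // !mulr_gt0 ?invr_gt0 ?pair_weight_gt0 ?mulr_gt0 ?ltr0n.
Qed.

Lemma ltr_dinfonce m1 m2 S i j : (m1 < m2)%N ->
  (i < m1)%N -> (j < m1)%N -> i != j ->
  dinfonce t m2 S i j < dinfonce t m1 S i j.
Proof.
move=> lt_m12 lt_im1 lt_jm1 neq_ij.
have le_m12 := ltnW lt_m12.
have m1_gt0 : (0 < m1)%N := leq_ltn_trans (leq0n i) lt_im1.
have m2_gt0 : (0 < m2)%N := leq_trans m1_gt0 le_m12.
rewrite !dinfonceE ?(leq_trans lt_im1) ?(leq_trans lt_jm1) // -!mulrA.
apply: (@lt_le_trans _ _ ((2 * m1%:R)^-1 * (t^-1 * pair_weight m2 S i j))).
  rewrite ltr_pM2r ?mulr_gt0 ?invr_gt0 ?pair_weight_gt0 //.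
  by rewrite ltf_pV2 ?posrE ?mulr_gt0 ?ltr0n // ltr_pM2l ?ltr_nat.
by rewrite ler_pM2l ?invr_gt0 ?mulr_gt0 ?ltr0n // ler_pM2l ?invr_gt0 // ler_pair_weight.
Qed.

End InfonceGradient.

Theorem theorem5p6 (R : realType) (t : R) (d n : nat)
    (u v : nat -> 'rV[R]_d) :
  0 < t ->
  (forall k, (k < n)%N -> dotp (u k) (u k) = 1 /\ dotp (v k) (v k) = 1) ->
  forall m1 m2 i j : nat,
    (0 < m1)%N -> (m1 <= m2)%N -> (m2 <= n)%N ->
    (i < m1)%N -> (j < m1)%N -> i <> j ->
    0 <= dinfonce t m2 (simil u v) i j /\
    dinfonce t m2 (simil u v) i j <= dinfonce t m1 (simil u v) i j /\
    (dinfonce t m2 (simil u v) i j = dinfonce t m1 (simil u v) i j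
       <-> m1 = m2).
Proof.
move=> t_gt0 _ m1 m2 i j _ le_m12 _ lt_im1 lt_jm1 /eqP neq_ij.
have d_gt0 := dinfonce_gt0 t_gt0 (simil u v)
  (leq_trans lt_im1 le_m12) (leq_trans lt_jm1 le_m12) neq_ij.
split; first exact: ltW.
move: le_m12; rewrite leq_eqVlt => /orP [/eqP eq_m | lt_m12].
  by subst m2; split.
have lt_d := ltr_dinfonce t_gt0 (simil u v) lt_m12 lt_im1 lt_jm1 neq_ij.
split; first exact: ltW.
split=> [eq_d | eq_m]; first by move: lt_d; rewrite eq_d ltxx.
by move: lt_m12; rewrite eq_m ltnn.
Qed.
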